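(* Given an $n$-vertex undirected simple graph $G$ (as an edge stream) and an integer $k$, there exists a deterministic streaming algorithm using $O(k\log n)$ passes and $\tilde O(kn)$ space that either outputs the partition of $V(G)$ into the vertex sets of the connected components of the complement $\overline{G}$, or finds an induced copy of $\text{co-}P_{k+2}$ in $G$.
   Context: Insertion-only streaming model: the edges of $G$ arrive as a stream in arbitrary order; the algorithm knows $n$, may scan the stream from beginning to end several times (passes), and its space is measured in bits. $P_m$ is the path on $m$ vertices and $\text{co-}P_m$ its complement. $\tilde O$ hides polylogarithmic factors in $n$. *)

From mathcomp Require Import all_boot all_order.
Set Implicit Arguments. Unset Strict Implicit. Unset Printing Implicit Defensive.

Definition valid_stream (n : nat) (s : seq {set 'I_n}) : bool :=
  uniq s && all (fun e : {set 'I_n} => #|e| == 2) s.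

Definition adj (n : nat) (s : seq {set 'I_n}) (x y : 'I_n) : bool :=
  (x != y) && ([set x; y] \in s).

Definition coadj (n : nat) (s : seq {set 'I_n}) (x y : 'I_n) : bool :=
  (x != y) && ~~ adj s x y.

Definition co_components (n : nat) (s : seq {set 'I_n}) : {set {set 'I_n}} :=
  [set [set y | connect (coadj s) x y] | x : 'I_n].

Definition induced_coP (n : nat) (s : seq {set 'I_n}) (m : nat)
    (p : seq 'I_n) : Prop :=
  size p = m /\ uniq p /\
  forall (i j : nat) (x y : 'I_n), onth p i = Some x -> onth p j = Some y ->
    i != j -> adj s x y = (i.+1 != j) && (j.+1 != i).

Inductive answer (n : nat) : Type :=
  | Partition of {set {set 'I_n}}
  | CoPath of seq 'I_n.

(* The memory is a bit string; it is updated by an arbitrary function on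
   each stream element (computation is free, only space is measured, as is
   standard), may be transformed at the end of each pass, and the answer is
   a function of the memory after the last pass. *)
Record salg (n : nat) := SAlg {
  sa_passes : nat;
  sa_init : bitseq;
  sa_step : bitseq -> {set 'I_n} -> bitseq;
  sa_end_pass : bitseq -> bitseq;
  sa_out : bitseq -> answer n }.

Definition run_pass (n : nat) (A : salg n) (s : seq {set 'I_n}) (st : bitseq) :=
  sa_end_pass A (foldl (sa_step A) st s).

Definition state_at (n : nat) (A : salg n) (s : seq {set 'I_n}) (i : nat) :=
  iter i (run_pass A s) (sa_init A).

Definition uses_space (n : nat) (A : salg n) (s : seq {set 'I_n}) (S : nat) :=
  (forall i, i < sa_passes A ->
     all (fun b => size b <= S) (scanl (sa_step A) (state_at A s i) s)) /\
  (forall i, i <= sa_passes A -> size (state_at A s i) <= S).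

Definition output (n : nat) (A : salg n) (s : seq {set 'I_n}) : answer n :=
  sa_out A (state_at A s (sa_passes A)).

Definition correct_answer (n k : nat) (s : seq {set 'I_n}) (a : answer n) :=
  match a with
  | Partition P => P = co_components s
  | CoPath p => induced_coP s (k + 2) p
  end.

From HB Require Import structures.
From mathcomp Require Import all_boot all_order.
From mathcomp Require Import zify.
Set Implicit Arguments. Unset Strict Implicit. Unset Printing Implicit Defensive.

(* Every vertex starts with its own index as label; in each round it adopts the
   smallest label among itself and its neighbours in the complement, and records
   the neighbour it took it from.  A vertex cannot see its co-neighbours, but it
   can binary-search the least key (label, index) of a co-neighbour: [v] has a
   co-neighbour of key at most [m] iff fewer stream edges join [v] to the
   vertices of key at most [m] than there are such vertices, which one pass with
   a counter per vertex decides.  So a round costs O(log n) passes.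
   After round [t] the label of [v] is the index of a vertex of its co-component
   and is at most every index within co-distance [t] of [v].  If round [k + 1]
   changes no label, the labels are therefore constant on co-components and
   distinct across them.  Otherwise the parent pointers from a vertex whose label
   still drops in round [k + 1] trace a co-path on [k + 2] vertices, which is
   induced because a chord or a repeated vertex would have brought the label to
   its end by round [k].  The memory (a label and a parent per vertex and round,
   two search bounds and a counter per vertex) has O(k n log n) bits. *)

Section Within.
Variables (T : finType) (e : rel T).

Fixpoint within t a b : bool :=
  if t is t'.+1 then [exists w, within t' a w && ((w == b) || e w b)] else a == b.

Lemma within1 a b : (a == b) || e a b -> within 1 a b.
Proof. by move=> hab /=; apply/existsP; exists a; rewrite eqxx. Qed.

Lemma withinS t a b : within t a b -> within t.+1 a b.
Proof. by move=> hab /=; apply/existsP; exists b; rewrite hab eqxx. Qed.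

Lemma within_leq t t' a b : t <= t' -> within t a b -> within t' a b.
Proof. by move=> /subnK <-; elim: (t' - t) => //= d IH /IH /withinS. Qed.

Lemma within_trans t t' a b c : within t a b -> within t' b c -> within (t + t') a c.
Proof.
elim: t' c => [|t' IH] c hab /=; first by rewrite addn0 => /eqP <-.
case/existsP=> w /andP [hbw hwc]; rewrite addnS /=.
by apply/existsP; exists w; rewrite IH.
Qed.
End Within.

Section LabelPropagation.
Variables (n : nat) (s : seq {set 'I_n}).

Lemma adjC x y : adj s x y = adj s y x.
Proof. by rewrite /adj eq_sym setUC. Qed.

Lemma coadj_sym : symmetric (coadj s).
Proof. by move=> x y; rewrite /coadj adjC eq_sym. Qed.

Record min_round (L L' : 'I_n -> nat) (par : 'I_n -> 'I_n) : Prop := MinRound {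
  parent_coadj : forall v, (par v == v) || coadj s (par v) v;
  label_parent : forall v, L' v = L (par v);
  label_decr : forall v, L' v <= L v;
  label_min : forall v x, coadj s x v -> L' v <= L x }.

Record propagation (r : nat) (L : nat -> 'I_n -> nat) (par : nat -> 'I_n -> 'I_n) :
    Prop := Propagation {
  label0 : forall v, L 0 v = v;
  label_round : forall t, t < r -> min_round (L t) (L t.+1) (par t.+1) }.

Section Rounds.
Variables (k : nat) (L : nat -> 'I_n -> nat) (par : nat -> 'I_n -> 'I_n).

(* [climb v i] follows [i] parent pointers down from round [k + 1];
   [trace v t] is the vertex reached at round [t]. *)
Fixpoint climb (v : 'I_n) i : 'I_n :=
  if i is i'.+1 then par (k.+1 - i') (climb v i') else v.

Definition trace v t := climb v (k.+1 - t).

Lemma trace_last v : trace v k.+1 = v.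
Proof. by rewrite /trace subnn. Qed.

Lemma trace_parent v t : t <= k -> trace v t = par t.+1 (trace v t.+1).
Proof.
move=> ht; rewrite /trace (_ : k.+1 - t = (k - t).+1) /=; last by lia.
by rewrite subSS (_ : k.+1 - (k - t) = t.+1) //; lia.
Qed.

Hypothesis HL : propagation k.+1 L par.

Lemma label_le_within t m v : t <= k.+1 -> within (coadj s) t m v -> L t v <= m.
Proof.
elim: t v => [|t IH] v ht /=; first by move=> /eqP <-; rewrite (label0 HL).
case/existsP=> w /andP [/(IH w (ltnW ht)) hw /orP [/eqP <-|hwv]].
- exact: leq_trans (label_decr (label_round HL ht) w) hw.
- exact: leq_trans (label_min (label_round HL ht) hwv) hw.
Qed.

Lemma label_connect t v :
  t <= k.+1 -> exists2 m : 'I_n, L t v = m & connect (coadj s) m v.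
Proof.
elim: t v => [|t IH] v ht; first by exists v; rewrite ?(label0 HL) ?connect0.
have Ht := label_round HL ht.
have [m hm hc] := IH (par t.+1 v) (ltnW ht).
exists m; first by rewrite (label_parent Ht) hm.
apply: connect_trans hc _.
by case/orP: (parent_coadj Ht v) => [/eqP ->|/connect1].
Qed.

Lemma label_trace v t : t <= k.+1 -> L t (trace v t) = L k.+1 v.
Proof.
move=> ht; rewrite -[t](@subKn t k.+1) //.
elim: (k.+1 - t) (leq_subr t k.+1) => [|i IH] hi; first by rewrite subn0 trace_last.
rewrite (_ : k.+1 - i = (k - i).+1) in IH; last by lia.
rewrite subSS trace_parent; last by lia.
by rewrite -(label_parent (label_round HL _)) ?IH //; lia.
Qed.

Section Stable.
Hypothesis stable : forall v, L k.+1 v = L k v.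

Lemma stable_label_coadj a b : coadj s a b -> L k a = L k b.
Proof.
have Hk := label_round HL (ltnSn k).
move=> hab; have := label_min Hk hab; rewrite coadj_sym in hab.
by have := label_min Hk hab; rewrite !stable; lia.
Qed.

Lemma stable_label_class x :
  [set y | L k y == L k x] = [set y | connect (coadj s) x y].
Proof.
apply/setP => y; rewrite !inE; apply/eqP/idP => [hxy|].
- have [mx hmx cx] := label_connect x (leqnSn k).
  have [my hmy cy] := label_connect y (leqnSn k).
  have emy : mx = my by apply: val_inj; rewrite /= -hmx -hmy hxy.
  rewrite -emy (sym_connect_sym coadj_sym) in cy.
  by rewrite (sym_connect_sym coadj_sym); exact: connect_trans cy cx.
- case/connectP=> p hp ->.
  elim: p x hp => [|z p IH] x //= /andP [hxz hp].
  by rewrite (IH _ hp) (stable_label_coadj hxz).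
Qed.

Lemma stable_labels_co_components :
  [set [set y | L k y == L k x] | x : 'I_n] = co_components s.
Proof. exact: eq_imset stable_label_class. Qed.
End Stable.

Lemma trace0 v : (trace v 0 : nat) = L k.+1 v.
Proof. by rewrite -(label_trace v (leq0n _)) (label0 HL). Qed.

Lemma trace_within v i j : i <= j -> j <= k.+1 -> 
  within (coadj s) (j - i) (trace v i) (trace v j).
Proof.
elim: j => [|j IH] hij hj; first by move: hij; rewrite leqn0 => /eqP ->; exact: eqxx.
case: (ltngtP i j.+1) => [hi||->]; [|lia|by rewrite subnn; exact: eqxx].
rewrite subSn // -addn1; apply: (within_trans (IH hi (ltnW hj))) (within1 _).
by rewrite trace_parent // (parent_coadj (label_round HL _)).
Qed.

Section Unstable.
Variable v : 'I_n.
Hypothesis unstable : L k.+1 v != L k v.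

(* A shortcut along the trace would bring the label [trace v 0] to [v] within
   [k] rounds, contradicting the drop of [v]'s label in round [k + 1]. *)
Lemma trace_no_shortcut i j : i < j -> j <= k.+1 ->
  (trace v i == trace v j) || (i.+1 < j) && coadj s (trace v i) (trace v j) -> False.
Proof.
move=> hij hj hsc.
have h0i := trace_within v (leq0n i) (leq_trans (ltnW hij) hj).
have hjv := trace_within v hj (leqnn _); rewrite trace_last in hjv.
have : within (coadj s) k (trace v 0) v.
  case/orP: hsc => [/eqP eij|/andP [hij' hc]].
  - by rewrite eij in h0i; apply: within_leq (within_trans h0i hjv); lia.
  - have hij1 : within (coadj s) 1 (trace v i) (trace v j) by rewrite within1 ?hc ?orbT.
    by apply: within_leq (within_trans (within_trans h0i hij1) hjv); lia.
move/(label_le_within (leqnSn k)); rewrite (trace0 v).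
have := label_decr (label_round HL (ltnSn k)) v; move: unstable; lia.
Qed.

Lemma trace_inj i j : i <= k.+1 -> j <= k.+1 -> trace v i = trace v j -> i = j.
Proof.
move=> hi hj eij; case: (ltngtP i j) => // hlt.
- by case: (trace_no_shortcut hlt hj); rewrite eij eqxx.
- by case: (trace_no_shortcut hlt hi); rewrite eij eqxx.
Qed.

Lemma adj_trace i j : i <= k.+1 -> j <= k.+1 -> i != j ->
  adj s (trace v i) (trace v j) = (i.+1 != j) && (j.+1 != i).
Proof.
wlog hij : i j / i < j => [W hi hj hne|hi hj _].
  case: (ltngtP i j) => hlt; first exact: W.
  - by rewrite adjC W // 1?eq_sym // andbC.
  - by rewrite hlt eqxx in hne.
have hne : trace v i != trace v j by apply/eqP => /trace_inj; lia.
have [eij|hi1] := eqVneq i.+1 j.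
- subst j; case/orP: (parent_coadj (label_round HL hj) (trace v i.+1)).
  + by rewrite -trace_parent // (negbTE hne).
  + by rewrite -trace_parent // /coadj => /andP [_ /negbTE ->].
- have hc : ~~ coadj s (trace v i) (trace v j).
    by apply/negP => hc; apply: (trace_no_shortcut hij hj); rewrite hc andbT; lia.
  by move: hc; rewrite /coadj hne negbK => ->; lia.
Qed.

Lemma induced_coP_trace : induced_coP s (k + 2) (map (trace v) (iota 0 (k + 2))).
Proof.
split; first by rewrite size_map size_iota.
split.
  rewrite map_inj_in_uniq ?iota_uniq // => i j.
  by rewrite !mem_iota => hi hj; apply: trace_inj; lia.
move=> i j x y; rewrite !onth_map.
have onth_iota l : l < k + 2 -> onth (iota 0 (k + 2)) l = Some l.
  by move=> hl; rewrite onthE (nth_map 0) ?size_iota ?nth_iota.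
case: (ltnP i (k + 2)) => [hi|hi]; last by rewrite onth_default ?size_iota.
case: (ltnP j (k + 2)) => [hj|hj]; last by rewrite [onth _ j]onth_default ?size_iota.
by rewrite !onth_iota // => -[<-] [<-]; apply: adj_trace; lia.
Qed.
End Unstable.
End Rounds.
End LabelPropagation.

Section Bisection.
Variable p : pred nat.
Hypothesis p_mono : forall t t', t <= t' -> p t -> p t'.

Definition bisect_inv lo hi b :=
  [/\ lo <= hi, p hi, forall t, t < lo -> ~~ p t & hi - lo < 2 ^ b].

Lemma bisect_inv_step lo hi b : bisect_inv lo hi b.+1 ->
  let m := (lo + hi) %/ 2 in
  bisect_inv (if p m then lo else m.+1) (if p m then m else hi) b.
Proof.
case=> le_lo_hi p_hi below_lo; rewrite expnS => width m.
case p_m: (p m); first by split => //; lia.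
have lt_m_hi : m < hi.
  by rewrite ltn_neqAle; apply/andP; split; [apply: contraFneq p_m => -> | lia].
split => //; last by lia.
move=> t; rewrite ltnS => le_t_m; apply: contraFN p_m; exact: p_mono.
Qed.

Lemma bisect_inv0 lo hi : bisect_inv lo hi 0 -> forall t, t < hi -> ~~ p t.
Proof. by case=> ? _ below_lo; rewrite expn0 => ? t ?; apply: below_lo; lia. Qed.
End Bisection.

Definition cap_add m (c : 'I_m.+1) d : 'I_m.+1 := inord (minn (c + d) m).

Lemma cap_addE m (c : 'I_m.+1) d : cap_add c d = minn (c + d) m :> nat.
Proof. by rewrite inordK // ltnS geq_minr. Qed.

Lemma cap_add0 m (c : 'I_m.+1) : cap_add c 0 = c.
Proof. by apply: ord_inj; rewrite cap_addE addn0; apply/minn_idPl; rewrite -ltnS. Qed.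

Lemma cap_addA m (c : 'I_m.+1) d d' : cap_add (cap_add c d) d' = cap_add c (d + d').
Proof. by apply: ord_inj; rewrite !cap_addE; lia. Qed.

Lemma foldl_cap_add (I : finType) (X : Type) m (f : I -> X -> nat)
    (c : {ffun I -> 'I_m.+1}) (s : seq X) :
  foldl (fun (c : {ffun I -> 'I_m.+1}) x => [ffun i => cap_add (c i) (f i x)]) c s =
  [ffun i => cap_add (c i) (\sum_(x <- s) f i x)].
Proof.
elim: s c => [|x s IH] c /=.
  by apply/ffunP => i; rewrite ffunE big_nil cap_add0.
by rewrite IH; apply/ffunP => i; rewrite !ffunE cap_addA big_cons.
Qed.

Lemma card_mem_seq_sum (T : finType) (X : eqType) (B : {set T}) (g : T -> X) (s : seq X) :
  uniq s -> #|[set y in B | g y \in s]| = \sum_(e <- s) #|[set y in B | e == g y]|.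
Proof.
elim: s => [|e s IH] /=.
  move=> _; rewrite big_nil; apply/eqP; rewrite cards_eq0.
  by apply/eqP/setP => y; rewrite !inE andbF.
rewrite big_cons => /andP [e_notin_s /IH <-].
have -> : [set y in B | g y \in e :: s] =
          [set y in B | e == g y] :|: [set y in B | g y \in s].
  by apply/setP => y; rewrite !inE [g y == e]eq_sym; case: (y \in B).
rewrite cardsU (_ : _ :&: _ = set0) ?cards0 ?subn0 //.
apply/setP => y; rewrite !inE; apply/negP => /andP [/andP [_ /eqP ey] /andP [_]].
by rewrite -ey (negbTE e_notin_s).
Qed.

Lemma card_edges_lt_coadj n (s : seq {set 'I_n}) (B : {set 'I_n}) v : v \notin B ->
  (#|[set y in B | [set v; y] \in s]| < #|B|) = [exists y in B, coadj s v y].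
Proof.
move=> v_notin_B; set S := [set y | [set v; y] \in s].
have -> : [set y in B | [set v; y] \in s] = B :&: S by apply/setP => y; rewrite !inE.
rewrite -(cardsID S B) -{1}[#|B :&: S|]addn0 ltn_add2l card_gt0.
apply/set0Pn/existsP => -[y].
- rewrite !inE => /andP [y_notin_S y_in_B]; exists y.
  rewrite y_in_B /coadj /adj (negbTE y_notin_S) andbF andbT.
  by apply: contraNneq v_notin_B => ->.
- case/andP=> y_in_B; rewrite /coadj /adj => /andP [v_ne_y].
  rewrite v_ne_y /= => y_notin_S.
  by exists y; rewrite !inE y_in_B y_notin_S.
Qed.

Lemma minn_lt_card n (B : {set 'I_n}) m : (minn m n < #|B|) = (m < #|B|).
Proof. by have := max_card B; rewrite card_ord; lia. Qed.

Fixpoint bits W m : bitseq := if W is W'.+1 then odd m :: bits W' m./2 else [::].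

Fixpoint nat_of_bits (b : bitseq) : nat :=
  if b is x :: b' then x + (nat_of_bits b').*2 else 0.

Lemma size_bits W m : size (bits W m) = W.
Proof. by elim: W m => //= W IH m; rewrite IH. Qed.

Lemma bitsK W m : m < 2 ^ W -> nat_of_bits (bits W m) = m.
Proof.
elim: W m => [|W IH] m /=; first by rewrite expn0; case: m.
by rewrite expnS => hm; rewrite IH ?odd_double_half // -divn2 ltn_divLR //; lia.
Qed.

Section FiniteMachine.
Variables (n : nat) (T : finType) (x0 : T) (W : nat).
Hypothesis card_T : #|T| <= 2 ^ W.
Variables (passes : nat) (read : T -> {set 'I_n} -> T) (end_pass : T -> T).
Variables (out : T -> answer n).

Definition encode (x : T) : bitseq := bits W (enum_rank x).
Definition decode (b : bitseq) : T := nth x0 (enum T) (nat_of_bits b).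

Lemma encodeK : cancel encode decode.
Proof.
move=> x; rewrite /decode /encode bitsK ?nth_enum_rank //.
exact: leq_trans (ltn_ord _) card_T.
Qed.

Definition machine_salg : salg n :=
  SAlg passes (encode x0) (fun b e => encode (read (decode b) e))
    (fun b => encode (end_pass (decode b))) (fun b => out (decode b)).

Definition machine_pass s x := end_pass (foldl read x s).

Lemma foldl_encode s x :
  foldl (sa_step machine_salg) (encode x) s = encode (foldl read x s).
Proof. by elim: s x => //= e s IH x; rewrite encodeK IH. Qed.

Lemma scanl_encode s x :
  scanl (sa_step machine_salg) (encode x) s = map encode (scanl read x s).
Proof. by elim: s x => //= e s IH x; rewrite encodeK IH. Qed.

Lemma state_at_machine s i :
  state_at machine_salg s i = encode (iter i (machine_pass s) x0).
Proof. by elim: i => //= i IH; rewrite IH /run_pass foldl_encode /= encodeK. Qed.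

Lemma machine_space s : uses_space machine_salg s W.
Proof.
split=> i _; rewrite state_at_machine ?size_bits //.
by rewrite scanl_encode all_map; apply/allP => y _ /=; rewrite size_bits.
Qed.

Lemma machine_output s : output machine_salg s = out (iter passes (machine_pass s) x0).
Proof. by rewrite /output state_at_machine /= encodeK. Qed.
End FiniteMachine.

Lemma uses_space_leq n (A : salg n) s S S' :
  S <= S' -> uses_space A s S -> uses_space A s S'.
Proof.
move=> le_S [during at_ends]; split=> [i /during|i /at_ends]; last by move/leq_trans; apply.
by apply: sub_all => b /leq_trans; apply.
Qed.

Lemma card_ffun_le (I J : finType) a b :
  #|I| <= a -> #|J| <= 2 ^ b -> #|{ffun I -> J}| <= 2 ^ (a * b).
Proof.
move=> hI hJ; have pos : 0 < 2 ^ b by rewrite expn_gt0.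
rewrite card_ffun mulnC expnM; apply: leq_trans (leq_pexp2l pos hI).
by elim: #|I| => // m IH; rewrite !expnS leq_mul.
Qed.

Section Algorithm.
Variables (n' k : nat).
Local Notation n := n'.+1.

Definition depth := 2 * up_log 2 n.
Definition nkeys := n * n.

Definition table := {ffun 'I_k.+2 -> {ffun 'I_n -> 'I_n}}.
Definition bounds := {ffun 'I_n -> 'I_nkeys.+1}.

Record control := Control {
  round : 'I_k.+2;
  probe : 'I_depth.+1;
  labels : table;
  parents : table;
  lo : bounds;
  hi : bounds }.

Definition control_tuple c := (round c, probe c, (labels c, parents c), (lo c, hi c)).
Definition tuple_control
    (x : 'I_k.+2 * 'I_depth.+1 * (table * table) * (bounds * bounds)) :=
  let: (r, j, (L, P), (l, h)) := x in Control r j L P l h.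

Lemma control_tupleK : cancel control_tuple tuple_control.
Proof. by case. Qed.

HB.instance Definition _ := Finite.copy control (can_type control_tupleK).

Lemma card_control :
  #|{: control}| = #|{: 'I_k.+2 * 'I_depth.+1 * (table * table) * (bounds * bounds)}|.
Proof.
apply: bij_eq_card; exists tuple_control; first exact: control_tupleK.
by case=> [[[r j] [L P]] [l h]].
Qed.

Definition label_at (F : table) t v : nat := F (inord t) v.
Definition parent_at (F : table) t v : 'I_n := F (inord t) v.

Definition set_round (F : table) i g : table := [ffun t => if val t == i then g else F t].

Lemma set_round_at F i g t : t <= k.+1 ->
  set_round F i g (inord t) = if t == i then g else F (inord t).
Proof. by move=> ht; rewrite ffunE /= inordK. Qed.

(* Vertices are compared by the key [L x * n + x]: by label, ties broken by
   index, so that the key determines the vertex. *)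
Definition key (L : {ffun 'I_n -> 'I_n}) x : nat := L x * n + x.
Definition keyed_vertex (h : bounds) v : 'I_n := inord (h v %% n).

Lemma key_lt L x : key L x < nkeys.
Proof. by rewrite /key /nkeys; have := ltn_ord (L x); have := ltn_ord x; nia. Qed.

Lemma key_modn L x : key L x %% n = x.
Proof. by rewrite /key modnMDl modn_small. Qed.

Lemma le_key L x y : key L x <= key L y -> L x <= L y.
Proof. by rewrite /key; have := ltn_ord x; have := ltn_ord y; nia. Qed.

Definition new_parents (L : {ffun 'I_n -> 'I_n}) (h : bounds) : {ffun 'I_n -> 'I_n} :=
  [ffun v => let x := keyed_vertex h v in if (h v < nkeys) && (L x < L v) then x else v].
Definition new_labels (L : {ffun 'I_n -> 'I_n}) h : {ffun 'I_n -> 'I_n} :=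
  [ffun v => L (new_parents L h v)].

Definition lo0 : bounds := [ffun => ord0].
Definition hi0 : bounds := [ffun => ord_max].

Definition mid c v := (lo c v + hi c v) %/ 2.
Definition probe_set c v := [set x | key (labels c (round c)) x <= mid c v].

Definition found c (o : {ffun 'I_n -> bool}) v := o v || (nkeys <= mid c v).
Definition next_lo c o : bounds :=
  [ffun v => if found c o v then lo c v else inord (mid c v).+1].
Definition next_hi c o : bounds :=
  [ffun v => if found c o v then inord (mid c v) else hi c v].

(* [o v] answers the probe "has [v] a co-neighbour of key at most [mid c v]?";
   after the last probe of a round, [next_hi c o v] is the least such key. *)
Definition update c (o : {ffun 'I_n -> bool}) : control :=
  if probe c < depth then
    Control (round c) (inord (probe c).+1) (labels c) (parents c)
      (next_lo c o) (next_hi c o)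
  else
    let L := labels c (round c) in
    Control (inord (round c).+1) (inord 0)
      (set_round (labels c) (round c).+1 (new_labels L (next_hi c o)))
      (set_round (parents c) (round c).+1 (new_parents L (next_hi c o))) lo0 hi0.

Definition counters := {ffun 'I_n -> 'I_n.+1}.
Definition memory := (control * counters)%type.

(* [v] has a co-neighbour in [probe_set c v] iff fewer than
   [#|probe_set c v :\ v|] stream edges join [v] to that set. *)
Definition incidences c v (e : {set 'I_n}) :=
  #|[set y in probe_set c v :\ v | e == [set v; y]]|.

Definition read (x : memory) e : memory :=
  (x.1, [ffun v => cap_add (x.2 v) (incidences x.1 v e)]).

Definition end_pass (x : memory) : memory :=
  (update x.1 [ffun v => x.2 v < #|probe_set x.1 v :\ v|], [ffun => ord0]).

Definition start_round r LL PP := Control (inord r) (inord 0) LL PP lo0 hi0.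
Definition identity_table : table := [ffun => [ffun x => x]].
Definition initial : memory :=
  (start_round 0 identity_table identity_table, [ffun => ord0]).
Definition npasses := k.+1 * depth.+1.

Definition answer_of (x : memory) : answer n :=
  let L := label_at (labels x.1) in
  if [pick v | L k.+1 v != L k v] is Some v then
    CoPath (map (trace k (parent_at (parents x.1)) v) (iota 0 (k + 2)))
  else Partition [set [set y | L k y == L k x] | x : 'I_n].

Variable s : seq {set 'I_n}.

Definition coneighbour_below c := [ffun v => [exists y in probe_set c v, coadj s v y]].
Definition search_pass c := update c (coneighbour_below c).

Lemma foldl_read c (cnt : counters) s' :
  foldl read (c, cnt) s' =
  (c, foldl (fun (cnt : counters) e => [ffun v => cap_add (cnt v) (incidences c v e)])
        cnt s').
Proof. by elim: s' cnt => //= e s' IH cnt; rewrite IH. Qed.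

Lemma machine_pass_search c : uniq s ->
  machine_pass read end_pass s (c, [ffun => ord0]) = (search_pass c, [ffun => ord0]).
Proof.
move=> us; rewrite /machine_pass foldl_read foldl_cap_add /end_pass /search_pass /=.
congr (update _ _, _); apply/ffunP => v; rewrite !ffunE cap_addE add0n.
have v_out : v \notin probe_set c v :\ v by rewrite setD11.
have -> : [exists y in probe_set c v, coadj s v y] =
          [exists y in probe_set c v :\ v, coadj s v y].
  apply: eq_existsb => y; rewrite in_setD1.
  by case: (eqVneq y v) => [->|]; rewrite /coadj ?eqxx ?andbF.
by rewrite -card_mem_seq_sum // -(card_edges_lt_coadj s v_out) minn_lt_card.
Qed.

(* The sentinel [nkeys] makes the search end at [nkeys] iff [v] has no
   co-neighbour. *)
Definition coneighbour_key_le (L : {ffun 'I_n -> 'I_n}) v t :=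
  [exists x, coadj s v x && (key L x <= t)] || (nkeys <= t).

Lemma coneighbour_key_le_mono L v t t' :
  t <= t' -> coneighbour_key_le L v t -> coneighbour_key_le L v t'.
Proof.
move=> le_t /orP [/existsP [x /andP [vx kx]]|hk]; apply/orP; last first.
  by right; exact: leq_trans hk le_t.
by left; apply/existsP; exists x; rewrite vx (leq_trans kx).
Qed.

Lemma found_search c v :
  found c (coneighbour_below c) v = coneighbour_key_le (labels c (round c)) v (mid c v).
Proof.
rewrite /found /coneighbour_key_le ffunE; congr orb.
by apply: eq_existsb => x; rewrite inE andbC.
Qed.

Lemma mid_le c v : mid c v <= nkeys.
Proof. by rewrite /mid; have := ltn_ord (lo c v); have := ltn_ord (hi c v); lia. Qed.

Lemma next_lo_search c v (p := coneighbour_key_le (labels c (round c)) v) :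
  (next_lo c (coneighbour_below c) v : nat) =
  (if p (mid c v) then lo c v : nat else (mid c v).+1).
Proof.
rewrite ffunE found_search /p; case: ifP => // /negbT /norP [_].
by rewrite -ltnNge => lt_mid; rewrite inordK.
Qed.

Lemma next_hi_search c v (p := coneighbour_key_le (labels c (round c)) v) :
  (next_hi c (coneighbour_below c) v : nat) =
  (if p (mid c v) then mid c v else hi c v).
Proof.
by rewrite ffunE found_search /p; case: ifP => //; rewrite inordK // ltnS mid_le.
Qed.

Section LeastKey.
Variables (L : {ffun 'I_n -> 'I_n}) (h : bounds).
Hypothesis h_found : forall v, coneighbour_key_le L v (h v).
Hypothesis h_least : forall v t, t < h v -> ~~ coneighbour_key_le L v t.

Lemma least_key_le v x : coadj s v x -> h v <= key L x.
Proof.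
move=> vx; rewrite leqNgt; apply/negP => /h_least /negP; apply.
by apply/orP; left; apply/existsP; exists x; rewrite vx leqnn.
Qed.

Lemma keyed_vertex_coneighbour v : h v < nkeys ->
  coadj s v (keyed_vertex h v) /\ key L (keyed_vertex h v) = h v.
Proof.
move=> h_lt; have := h_found v; rewrite /coneighbour_key_le leqNgt h_lt orbF.
case/existsP=> x /andP [vx kx].
have kx' : key L x = h v by apply/eqP; rewrite eqn_leq kx least_key_le.
suff -> : keyed_vertex h v = x by [].
by apply: ord_inj; rewrite /keyed_vertex -kx' key_modn inordK.
Qed.

Lemma min_round_new :
  min_round s (fun v => L v : nat) (fun v => new_labels L h v : nat) (new_parents L h).
Proof.
split=> [v|v|v|v x]; rewrite ?ffunE //=.
- case: ifP => [/andP [h_lt _]|_]; last by rewrite eqxx.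
  by rewrite coadj_sym (keyed_vertex_coneighbour h_lt).1 orbT.
- by case: ifP => [/andP [_ /ltnW]|_].
- rewrite coadj_sym => vx; have le_hv := least_key_le vx.
  have h_lt : h v < nkeys := leq_ltn_trans le_hv (key_lt L x).
  have [_ kv] := keyed_vertex_coneighbour h_lt.
  have le_L : L (keyed_vertex h v) <= L x by apply: le_key; rewrite kv.
  rewrite h_lt /=; case: ifP => // /negbT; rewrite -leqNgt => le_v.
  exact: leq_trans le_v le_L.
Qed.
End LeastKey.

Lemma nkeys_lt : nkeys < 2 ^ depth.+1.
Proof.
have n_le := @up_logP 2 n isT.
by rewrite /nkeys /depth mul2n -addnn expnS expnD; nia.
Qed.

Lemma propagation_set_round r LL PP (g p : {ffun 'I_n -> 'I_n}) : r <= k ->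
  propagation s r (label_at LL) (parent_at PP) ->
  min_round s (label_at LL r) (fun v => g v : nat) p ->
  propagation s r.+1 (label_at (set_round LL r.+1 g)) (parent_at (set_round PP r.+1 p)).
Proof.
move=> le_r [L0 Lround] round_r; split=> [v|t lt_t].
  by have := L0 v; rewrite /label_at set_round_at.
rewrite /label_at /parent_at !set_round_at ?eqSS; try lia.
case: (ltngtP t r) => [lt_tr||->]; rewrite ?(ltn_eqF lt_t) ?(ltn_eqF (ltnSn r)).
- exact: Lround.
- lia.
- exact: round_r.
Qed.

Section Round.
Variables (r : nat) (LL PP : table).
Hypothesis le_r : r <= k.
Let L := LL (inord r).
Let p v := coneighbour_key_le L v.

Lemma search_probes j : j <= depth -> exists l h : bounds,
  iter j search_pass (start_round r LL PP) = Control (inord r) (inord j) LL PP l h /\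
  forall v, bisect_inv (p v) (l v) (h v) (depth.+1 - j).
Proof.
elim: j => [|j IH] le_j.
  exists lo0, hi0; split => // v; rewrite !ffunE subn0; split => //.
  - by rewrite /p /coneighbour_key_le leqnn orbT.
  - by rewrite subn0; exact: nkeys_lt.
have [l [h [e inv]]] := IH (ltnW le_j); rewrite iterS e.
set c := Control _ _ _ _ _ _.
exists (next_lo c (coneighbour_below c)), (next_hi c (coneighbour_below c)); split.
  by rewrite /search_pass /update /= inordK ?le_j //; lia.
move=> v; rewrite next_lo_search next_hi_search /mid /=.
have := inv v; rewrite (_ : depth.+1 - j = (depth - j).+1); last by lia.
rewrite (_ : depth.+1 - j.+1 = depth - j); last by lia.
by apply: bisect_inv_step => t t'; apply: coneighbour_key_le_mono.
Qed.

Lemma search_round : exists LL' PP',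
  iter depth.+1 search_pass (start_round r LL PP) = start_round r.+1 LL' PP' /\
  (propagation s r (label_at LL) (parent_at PP) ->
   propagation s r.+1 (label_at LL') (parent_at PP')).
Proof.
have [l [h [e inv]]] := search_probes (leqnn depth).
set c := Control _ _ _ _ _ _ in e.
set h' := next_hi c (coneighbour_below c).
exists (set_round LL r.+1 (new_labels L h')), (set_round PP r.+1 (new_parents L h')).
split.
  by rewrite iterS e /search_pass /update /= !inordK ?ltnn //; lia.
have inv' v : bisect_inv (p v) (next_lo c (coneighbour_below c) v) (h' v) 0.
  rewrite next_lo_search /h' next_hi_search /mid /=.
  have := inv v; rewrite subSnn.
  by apply: bisect_inv_step => t t'; apply: coneighbour_key_le_mono.
move=> HL; apply: propagation_set_round => //.
apply: min_round_new => [v|v]; first by case: (inv' v).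
by apply: bisect_inv0 (inv' v).
Qed.
End Round.

Lemma run_rounds r : r <= k.+1 -> exists LL PP,
  iter (r * depth.+1) search_pass initial.1 = start_round r LL PP /\
  propagation s r (label_at LL) (parent_at PP).
Proof.
elim: r => [|r IH] le_r.
  exists identity_table, identity_table; split => //.
  by split => // v; rewrite /label_at !ffunE.
have [LL [PP [e HL]]] := IH (ltnW le_r).
have [LL' [PP' [e' HL']]] := @search_round r LL PP le_r.
by exists LL', PP'; rewrite mulSn iterD e e'; split => //; apply: HL'.
Qed.

Lemma iter_machine_pass i : uniq s ->
  iter i (machine_pass read end_pass s) initial = (iter i search_pass initial.1, initial.2).
Proof. by move=> us; elim: i => //= i ->; rewrite machine_pass_search. Qed.

Lemma answer_of_correct : uniq s ->
  correct_answer k s (answer_of (iter npasses (machine_pass read end_pass s) initial)).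
Proof.
move=> us; rewrite iter_machine_pass //.
have [LL [PP [-> HL]]] := run_rounds (leqnn k.+1).
rewrite /answer_of /=; case: pickP => [v unstable|stable] /=.
  exact: (induced_coP_trace HL unstable).
by apply: (stable_labels_co_components HL) => v; apply/eqP/negbFE/stable.
Qed.
End Algorithm.

Section Space.
Variables (n' k : nat).
Local Notation n := n'.+1.
Local Notation u := (up_log 2 n).

Definition width :=
  let table_bits := k.+2 * (n * u) in let bounds_bits := n * (depth n').+1 in
  k.+2 + (depth n').+1 + (table_bits + table_bits) + (bounds_bits + bounds_bits) + n * u.+1.

Lemma card_memory : #|{: memory n' k}| <= 2 ^ width.
Proof.
have n_le : n <= 2 ^ u := @up_logP 2 n isT.
have card_ord_exp m : #|'I_m| <= 2 ^ m by rewrite card_ord ltnW // ltn_expl.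
have card_table : #|{: table n' k}| <= 2 ^ (k.+2 * (n * u)).
  by apply: card_ffun_le; [rewrite card_ord | apply: card_ffun_le; rewrite ?card_ord].
have card_bounds : #|{: bounds n'}| <= 2 ^ (n * (depth n').+1).
  by apply: card_ffun_le; rewrite ?card_ord ?nkeys_lt.
have card_counters : #|{: counters n'}| <= 2 ^ (n * u.+1).
  by apply: card_ffun_le; rewrite ?card_ord // expnS; lia.
rewrite /memory card_prod card_control !card_prod.
apply: leq_trans (leq_mul (leq_mul (leq_mul (leq_mul (card_ord_exp _) (card_ord_exp _))
  (leq_mul card_table card_table)) (leq_mul card_bounds card_bounds)) card_counters) _.
by rewrite -!expnD.
Qed.
End Space.

Theorem lemma25 :
  exists (C d : nat), forall n k : nat, 2 <= n -> 1 <= k ->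
    exists A : salg n,
      sa_passes A <= C * k * up_log 2 n /\
      forall s : seq {set 'I_n}, valid_stream s ->
        uses_space A s (C * k * n * (up_log 2 n) ^ d) /\
        correct_answer k s (output A s).
Proof.
exists 20, 1 => -[//|n'] k lt1n le1k.
have u_gt0 : 0 < up_log 2 n'.+1 by rewrite up_log_gt0.
exists (machine_salg (initial n' k) (width n' k) (npasses n' k)
          (@read n' k) (@end_pass n' k) (@answer_of n' k)).
split=> [|s /andP [uniq_s _]]; first by rewrite /= /npasses /depth; nia.
split; last by rewrite (machine_output _ (card_memory n' k)); exact: answer_of_correct.
apply: uses_space_leq (machine_space _ (card_memory n' k) _ _ _ _ _).
rewrite /width /depth expn1.
have le_nu : n'.+1 <= n'.+1 * up_log 2 n'.+1 by rewrite leq_pmulr.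
have le_knu : n'.+1 * up_log 2 n'.+1 <= k * n'.+1 * up_log 2 n'.+1.
  by rewrite -mulnA leq_pmull.
nia.
Qed.
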